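(* Let $c\ge2$, let $\Gamma$ be a $c$-uniform unoriented hypergraph with $E\neq\varnothing$ and no isolated vertices, with smallest normalized Laplacian eigenvalue $\lambda_1$, and let $q\in[0,c-1]$ be real. Then \[ \chi^{q\text{-t}}(\Gamma)\;\ge\;\frac{c-\lambda_1}{q+1-\lambda_1}. \] Moreover, the bound is sharp: whenever $q$ is an integer with $(q+1)\mid c$, there exists a $c$-uniform unoriented hypergraph attaining equality.
   Context: A hypergraph has finite vertex set $V$ and edge set $E\subseteq\mathcal P(V)$; it is $c$-uniform if $|e|=c$ for all $e$, and unoriented means all incidences have orientation $+1$. $\deg v=|\{e\in E: v\in e\}|\ge1$, $D=\mathrm{diag}(\deg v)$, adjacency $A_{v,v}=0$ and $A_{v,w}=-|\{e\in E: v,w\in e\}|$ for $v\ne w$, normalized Laplacian $L=\mathrm{Id}-D^{-1}A$ with eigenvalues $\lambda_1\le\dots\le\lambda_N$. For $q\in[0,c-1]$, a $k$-coloring $V\to\{1,\dots,k\}$ with color classes $V_1,\dots,V_k$ is $q$-tailored if for all $i$ and all $v\in V_i$, $\sum_{w\in V_i}|A_{v,w}|\le q\deg v$; $\chi^{q\text{-t}}(\Gamma)$ is the least $k$ admitting a $q$-tailored $k$-coloring. *)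

From HB Require Import structures.
From mathcomp Require Import all_boot all_order all_algebra.
Set Implicit Arguments. Unset Strict Implicit. Unset Printing Implicit Defensive.
Import Order.TTheory GRing.Theory Num.Theory.
Local Open Scope ring_scope.

(* A hypergraph on the finite vertex set V is given by its edge set
   E : {set {set V}}.  All incidences are +1 (unoriented). *)
Section Hypergraph.
Variable V : finType.
Variable E : {set {set V}}.

Definition uniform (c : nat) : Prop := forall e, e \in E -> #|e| = c.

Definition hdeg (v : V) : nat := #|[set e in E | v \in e]|.

Definition no_isolated : Prop := forall v : V, (1 <= hdeg v)%N.

Definition ncommon (v w : V) : nat := #|[set e in E | (v \in e) && (w \in e)]|.

Variable R : rcfType.

Definition hadj (v w : V) : R := if v == w then 0 else - (ncommon v w)%:R.

Definition nlap : 'M[R]_#|V| :=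
  \matrix_(i, j) ((i == j)%:R
                  - ((hdeg (enum_val i))%:R)^-1 * hadj (enum_val i) (enum_val j)).

Definition smallest_eigenvalue (l1 : R) : Prop :=
  eigenvalue nlap l1 /\ forall mu, eigenvalue nlap mu -> l1 <= mu.

(* q-tailored k-coloring (colors 'I_k correspond to {1,..,k}) *)
Definition tailored (q : R) (k : nat) (f : {ffun V -> 'I_k}) : bool :=
  [forall v, \sum_(w | f w == f v) `|hadj v w| <= q * (hdeg v)%:R].

Definition tailored_colorable (q : R) (k : nat) : bool :=
  [exists f : {ffun V -> 'I_k}, tailored q f].

Lemma tailored_colorable_card (q : R) : 0 <= q ->
  exists k, tailored_colorable q k.
Proof.
move=> q0; exists #|V|; apply/existsP; exists [ffun v => enum_rank v].
apply/forallP => v.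
rewrite (big_pred1 v); last first.
  by move=> w /=; rewrite !ffunE; apply/eqP/eqP => [/enum_rank_inj|->].
by rewrite /hadj eqxx normr0 mulr_ge0.
Qed.

Definition chi_t (q : R) (hq : 0 <= q) : nat :=
  ex_minn (tailored_colorable_card hq).

End Hypergraph.

(* Write L = 1 + D^-1 N, where N = -A is symmetric with nonnegative entries.
   Since L is similar to the symmetric 1 + D^-1/2 N D^-1/2, the quadratic form
   of N is bounded below by (l1 - 1) times that of D.  Given a q-tailored
   k-coloring f, evaluate this bound on the k vectors 1 - k [f = a]: the rows
   of N sum to (c - 1) deg, and the same-colour part of each row is at most
   q deg, which yields (l1 - 1)(k - 1) - k q + c - 1 <= 0, i.e.
   k >= (c - l1) / (q + 1 - l1).  Equality holds for a single edge on c
   vertices: there L is the all-ones matrix, so l1 = 0, and colouring by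
   blocks of q + 1 consecutive vertices is q-tailored with c / (q + 1) colours. *)

From HB Require Import structures.
From mathcomp Require Import all_boot all_order all_algebra.
From mathcomp Require Import complex ring lra.
Set Implicit Arguments.
Unset Strict Implicit.
Unset Printing Implicit Defensive.

Import Order.TTheory GRing.Theory Num.Theory.
Local Open Scope ring_scope.
Local Open Scope sesquilinear_scope.

Lemma eigenvalue_subr_scalar (F : fieldType) n (A : 'M[F]_n) a r :
  eigenvalue (A - a%:M) r -> eigenvalue A (r + a).
Proof.
move=> /eigenvalueP [v hv vnz]; apply/eigenvalueP; exists v => //.
by move: hv; rewrite mulmxBr mul_mx_scalar scalerDl => /eqP; rewrite subr_eq => /eqP.
Qed.

Lemma eigenvalue_add1mx (F : fieldType) n (A : 'M[F]_n) a :
  eigenvalue A a -> eigenvalue (1%:M + A) (1 + a).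
Proof.
move=> /eigenvalueP [v hv vnz]; apply/eigenvalueP; exists v => //.
by rewrite mulmxDr mulmx1 hv scalerDl scale1r.
Qed.

Section RealSymmetric.
Variables (R : rcfType) (n : nat).

(* Diagonalize the symmetric matrix over [R[i]] by a unitary matrix: the
   quadratic form becomes a nonnegative combination of the (real) eigenvalues. *)
Lemma sym_eigenvalue_ge0_psd (S : 'M[R]_n) :
  S^T = S -> (forall r, eigenvalue S r -> 0 <= r) ->
  forall z : 'rV_n, 0 <= (z *m S *m z^T) 0 0.
Proof.
move=> Ssym Sev z.
pose f := real_complex R.
pose Sc := map_mx f S.
have Sreal : Sc \is a realmx.
  by apply/mxOverP => i j; rewrite mxE; apply/complex_realP; exists (S i j).
have Sher : Sc \is hermsymmx.
  apply: realsym_hermsym => //; apply/is_hermitianmxP.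
  by rewrite expr0 scale1r map_mx_id // /Sc map_trmx Ssym.
have /orthomx_spectralP Seq := hermitian_normalmx Sher.
set P := spectralmx Sc in Seq; set X := spectral_diag Sc in Seq.
have Pu : P \is unitarymx by apply: spectral_unitarymx.
rewrite invmx_unitary // in Seq.
have X_ge0 k : 0 <= X 0 k.
  have /complex_realP [r Xr] := mxOverP (hermitian_spectral_diag_real Sher) 0 k.
  rewrite -/X in Xr; rewrite Xr ler0c; apply: Sev.
  rewrite -(eigenvalue_map f) -/Sc; apply/eigenvalueP; exists (row k P).
    rewrite Seq !mulmxA -row_mul (unitarymxP Pu) -!row_mul mul1mx mul_diag_mx.
    by apply/rowP => j; rewrite !mxE Xr.
  apply/eqP => h; have := unitarymxP Pu.
  move/(congr1 (row k)); rewrite row_mul h mul0mx => /rowP /(_ k).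
  by rewrite !mxE eqxx /= => /eqP; rewrite eq_sym oner_eq0.
have zc_adj : (map_mx f z) ^t* = map_mx f z^T.
  apply/matrixP => i j; rewrite !mxE conj_Creal //.
  by apply/complex_realP; exists (z j i).
rewrite -ler0c (_ : _%:C%C = (map_mx f z *m Sc *m (map_mx f z) ^t* ) 0 0); last first.
  by rewrite zc_adj /Sc -!map_mxM [in RHS]mxE.
set w := map_mx f z *m P ^t*.
rewrite Seq !mulmxA (_ : _ *m P *m _ = w *m diag_mx X *m w ^t*); last first.
  by rewrite /w trmx_mul map_mxM trmxCK !mulmxA.
rewrite mul_mx_diag !mxE; apply: sumr_ge0 => k _; rewrite !mxE.
by rewrite mulrAC mulr_ge0 // mul_conjC_ge0.
Qed.

Lemma sym_eigenvalue_ge_quad (S : 'M[R]_n) m :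
  S^T = S -> (forall r, eigenvalue S r -> m <= r) ->
  forall z : 'rV_n, m * (z *m z^T) 0 0 <= (z *m S *m z^T) 0 0.
Proof.
move=> Ssym Sev z; rewrite -subr_ge0.
have Sm_sym : (S - m%:M)^T = S - m%:M by rewrite linearB /= tr_scalar_mx Ssym.
have Sm_ev r : eigenvalue (S - m%:M) r -> 0 <= r.
  by move/eigenvalue_subr_scalar/Sev; rewrite lerDr.
have := sym_eigenvalue_ge0_psd Sm_sym Sm_ev z.
by rewrite mulmxBr mulmxBl mul_mx_scalar -scalemxAl !mxE.
Qed.

(* Symmetrize [D^-1 N] as [D^-1/2 N D^-1/2], which has the same eigenvalues. *)
Lemma weighted_eigenvalue_ge_quad (d : 'rV[R]_n) (N : 'M_n) m :
  (forall i, 0 < d 0 i) -> N^T = N ->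
  (forall mu, eigenvalue (diag_mx (\row_i (d 0 i)^-1) *m N) mu -> m <= mu) ->
  forall y : 'rV_n, m * (y *m diag_mx d *m y^T) 0 0 <= (y *m N *m y^T) 0 0.
Proof.
move=> d_gt0 Nsym Nev y.
pose s := \row_i Num.sqrt (d 0 i).
have sqrt_neq0 i : Num.sqrt (d 0 i) != 0 by rewrite gt_eqF ?sqrtr_gt0.
pose Ds := diag_mx s; pose Di := diag_mx (\row_i (s 0 i)^-1).
have DsDi : Ds *m Di = 1%:M.
  by rewrite mulmx_diag -diag_const_mx; congr diag_mx; apply/rowP => i; rewrite !mxE mulfV.
have DiDs : Di *m Ds = 1%:M by rewrite diag_mxC.
have DsDs : Ds *m Ds = diag_mx d.
  rewrite mulmx_diag; congr diag_mx; apply/rowP => i.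
  by rewrite !mxE -expr2 sqr_sqrtr ?ltW.
have DiDi : Di *m Di = diag_mx (\row_i (d 0 i)^-1).
  rewrite mulmx_diag; congr diag_mx; apply/rowP => i.
  by rewrite !mxE -invfM -expr2 sqr_sqrtr ?ltW.
pose S := Di *m N *m Di.
have Ssym : S^T = S by rewrite /S !trmx_mul tr_diag_mx Nsym mulmxA.
have Sev r : eigenvalue S r -> m <= r.
  move=> /eigenvalueP [v hv vnz]; apply: Nev; apply/eigenvalueP; exists (v *m Ds).
    rewrite -DiDi !mulmxA -(mulmxA v) DsDi mulmx1 scalemxAl -hv.
    by rewrite /S -!mulmxA DiDs mulmx1.
  by apply: contra vnz => /eqP h; rewrite -(mulmx1 v) -DsDi mulmxA h mul0mx.
have := sym_eigenvalue_ge_quad Ssym Sev (y *m Ds).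
rewrite trmx_mul tr_diag_mx /S !mulmxA -(mulmxA y Ds Ds) DsDs.
by rewrite -(mulmxA y Ds Di) DsDi mulmx1 -(mulmxA _ Di Ds) DiDs mulmx1.
Qed.

End RealSymmetric.

Lemma mx_quadE (R : comNzRingType) n (y : 'rV[R]_n) (M : 'M_n) :
  (y *m M *m y^T) 0 0 = \sum_i \sum_j y 0 i * M i j * y 0 j.
Proof.
rewrite mxE; under eq_bigr do rewrite !mxE big_distrl /=.
by rewrite exchange_big.
Qed.

Lemma mx_quad_diagE (R : comNzRingType) n (y d : 'rV[R]_n) :
  (y *m diag_mx d *m y^T) 0 0 = \sum_i d 0 i * y 0 i ^+ 2.
Proof.
rewrite mul_mx_diag mxE; apply: eq_bigr => i _; rewrite !mxE.
by rewrite mulrC mulrA expr2 mulrC.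
Qed.

Lemma sumr_mul_indicator (R : comNzRingType) (T : finType) (F : T -> R) a :
  \sum_x F x * (x == a)%:R = F a.
Proof.
rewrite (bigD1 a) //= eqxx mulr1 big1 ?addr0 //.
by move=> x /negbTE ->; rewrite mulr0.
Qed.

Lemma sumr_indicator (R : comNzRingType) (T : finType) (a : T) :
  \sum_x (x == a)%:R = 1 :> R.
Proof.
rewrite -[RHS](sumr_mul_indicator (fun _ => 1) a).
by apply: eq_bigr => x _; rewrite mul1r.
Qed.

Lemma sum_color_dev (R : comNzRingType) k (x y : 'I_k) :
  \sum_(a < k) (1 - k%:R * (x == a)%:R) * (1 - k%:R * (y == a)%:R) =
  k%:R ^+ 2 * (x == y)%:R - k%:R :> R.
Proof.
transitivity (\sum_(a < k) (1 - k%:R * (a == x)%:R - k%:R * (a == y)%:R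
                 + k%:R ^+ 2 * ((x == a)%:R * (a == y)%:R)) : R).
  by apply: eq_bigr => a _; rewrite ![_ == a]eq_sym; ring.
rewrite !big_split /= !sumrN sumr_const card_ord -!mulr_sumr !sumr_indicator.
rewrite sumr_mul_indicator; ring.
Qed.

(* Hoffman's argument: test the quadratic lower bound on the k vectors
   [1 - k [f v = a]]. *)
Section TailoredColoring.
Variables (R : realFieldType) (V : finType) (d : V -> R) (N : V -> V -> R).
Variables (m c q : R).
Hypothesis d_gt0 : forall v, 0 < d v.
Hypothesis N_diag : forall v, N v v = 0.
Hypothesis N_rowsum : forall v, \sum_w N v w = (c - 1) * d v.
Hypothesis N_quad_ge : forall Y : V -> R,
  m * \sum_v d v * Y v ^+ 2 <= \sum_v \sum_w Y v * N v w * Y w.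

Lemma quad_bound_le0 (v0 : V) : m <= 0.
Proof.
have := N_quad_ge (fun v => (v == v0)%:R).
rewrite (bigD1 v0) //= eqxx expr1n mulr1 big1 ?addr0; last first.
  by move=> v /negbTE ->; rewrite expr0n mulr0.
under eq_bigr do rewrite sumr_mul_indicator mulrC.
by rewrite sumr_mul_indicator N_diag pmulr_lle0.
Qed.

Variables (k : nat) (f : V -> 'I_k).
Hypothesis f_tailored : forall v, \sum_(w | f w == f v) N v w <= q * d v.

Let W := \sum_v d v.
Let K : R := k%:R.
Let Y (a : 'I_k) (v : V) : R := 1 - K * (f v == a)%:R.

Lemma sum_color_dev_weights :
  \sum_(a < k) \sum_v d v * Y a v ^+ 2 = (K ^+ 2 - K) * W.
Proof.
rewrite exchange_big /= /W mulr_sumr; apply: eq_bigr => v _.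
rewrite -mulr_sumr mulrC; congr (_ * _).
under eq_bigr do rewrite expr2.
by rewrite sum_color_dev eqxx mulr1.
Qed.

Lemma sum_color_dev_quad :
  \sum_(a < k) \sum_v \sum_w Y a v * N v w * Y a w =
  K ^+ 2 * \sum_v \sum_w N v w * (f v == f w)%:R - K * ((c - 1) * W).
Proof.
rewrite exchange_big /= /W mulr_sumr mulr_sumr [K * _]mulr_sumr -sumrB.
apply: eq_bigr => v _; rewrite exchange_big /= -N_rowsum.
rewrite mulr_sumr mulr_sumr -sumrB; apply: eq_bigr => w _.
under eq_bigr do rewrite mulrAC.
by rewrite -mulr_suml sum_color_dev; ring.
Qed.

Lemma sum_same_color_le : \sum_v \sum_w N v w * (f v == f w)%:R <= q * W.
Proof.
rewrite /W mulr_sumr; apply: ler_sum => v _.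
apply: le_trans (f_tailored v); rewrite [X in _ <= X]big_mkcond /=.
by apply: ler_sum => w _; rewrite eq_sym; case: ifP; rewrite ?mulr1 ?mulr0.
Qed.

Lemma tailored_coloring_ineq (v0 : V) :
  m * (K - 1) - K * q + (c - 1) <= 0.
Proof.
have K_gt0 : 0 < K by rewrite ltr0n (leq_ltn_trans _ (ltn_ord (f v0))).
have W_gt0 : 0 < W.
  rewrite /W (bigD1 v0) //=; apply: ltr_pwDl (d_gt0 v0) _.
  by apply: sumr_ge0 => v _; exact: ltW.
have KK_ge0 : 0 <= K ^+ 2 by rewrite exprn_ge0 ?ltW.
have quad : \sum_(a < k) m * \sum_v d v * Y a v ^+ 2 <=
             \sum_(a < k) \sum_v \sum_w Y a v * N v w * Y a w.
  by apply: ler_sum => a _; exact: N_quad_ge.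
rewrite -mulr_sumr sum_color_dev_weights sum_color_dev_quad in quad.
rewrite -(pmulr_rle0 _ (mulr_gt0 K_gt0 W_gt0)).
have -> : K * W * (m * (K - 1) - K * q + (c - 1)) =
    m * ((K ^+ 2 - K) * W) - (K ^+ 2 * (q * W) - K * ((c - 1) * W)) by ring.
rewrite subr_le0; apply: (le_trans quad).
by rewrite lerD2r ler_wpM2l // sum_same_color_le.
Qed.

Lemma tailored_coloring_bound (v0 : V) :
  0 <= q -> 1 < c -> (c - 1 - m) / (q - m) <= K.
Proof.
move=> q_ge0 c_gt1.
have m_le0 := quad_bound_le0 v0.
have ineq := tailored_coloring_ineq v0.
have K_ge1 : 1 <= K by rewrite ler1n (leq_ltn_trans _ (ltn_ord (f v0))).
have den_gt0 : 0 < q - m by move: ineq; nra.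
by rewrite ler_pdivrMr //; move: ineq; nra.
Qed.

End TailoredColoring.

Section HypergraphLaplacian.
Variables (R : rcfType) (V : finType) (E : {set {set V}}).

Lemma ncommon_sym v w : ncommon E v w = ncommon E w v.
Proof. by apply: eq_card => e; rewrite !inE [(v \in e) && _]andbC. Qed.

Lemma ncommon_diag v : ncommon E v v = hdeg E v.
Proof. by apply: eq_card => e; rewrite !inE andbb. Qed.

Lemma hadj_sym v w : hadj E R v w = hadj E R w v.
Proof. by rewrite /hadj eq_sym ncommon_sym. Qed.

Lemma normr_hadj v w : `|hadj E R v w| = - hadj E R v w.
Proof. by rewrite /hadj; case: eqP; rewrite ?normr0 ?oppr0 // normrN opprK normr_nat. Qed.

(* Double counting of the incidences (w, e) with v, w in e. *)
Lemma sum_ncommon c : uniform E c ->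
  forall v, (\sum_w ncommon E v w = c * hdeg E v)%N.
Proof.
move=> Eunif v.
have ncommonE w : ncommon E v w = \sum_(e in E) ((v \in e) && (w \in e) : nat).
  rewrite /ncommon -sum1_card big_mkcond [RHS]big_mkcond /=.
  by apply: eq_bigr => e _; rewrite inE; case: (e \in E); case: (v \in e); case: (w \in e).
under eq_bigr do rewrite ncommonE.
rewrite exchange_big /= /hdeg -sum1_card big_distrr /= big_mkcond [RHS]big_mkcond /=.
apply: eq_bigr => e _; rewrite inE; case eE : (e \in E) => //=.
case: (v \in e) => /=; last by rewrite big1.
rewrite -(Eunif e eE) muln1 -sum1_card [RHS]big_mkcond /=.
by apply: eq_bigr => w _; case: (w \in e).
Qed.

Lemma sum_oppr_hadj c : uniform E c ->
  forall v, \sum_w - hadj E R v w = (c%:R - 1) * (hdeg E v)%:R.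
Proof.
move=> Eunif v; have := sum_ncommon Eunif v.
rewrite (bigD1 v) //= ncommon_diag => /(congr1 (GRing.natmul (1 : R))).
rewrite natrD natrM natr_sum => sumE; apply: (addrI (hdeg E v)%:R).
rewrite (bigD1 v) //= {1}/hadj eqxx oppr0 add0r.
rewrite (eq_bigr (fun w => (ncommon E v w)%:R)); last first.
  by move=> w /negbTE vw; rewrite /hadj eq_sym vw opprK.
by rewrite sumE; ring.
Qed.

Lemma nlap_decomp : nlap E R = 1%:M +
  diag_mx (\row_i ((hdeg E (enum_val i))%:R)^-1) *m
  \matrix_(i, j) - hadj E R (enum_val i) (enum_val j).
Proof.
by apply/matrixP => i j; rewrite mul_diag_mx !mxE mulrN.
Qed.

Lemma hadj_quad_ge l1 : no_isolated E -> smallest_eigenvalue E l1 ->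
  forall Y : V -> R, (l1 - 1) * \sum_v (hdeg E v)%:R * Y v ^+ 2 <=
                     \sum_v \sum_w Y v * - hadj E R v w * Y w.
Proof.
move=> Enoiso [_ l1_min] Y.
pose d : 'rV[R]_#|V| := \row_i ((hdeg E (enum_val i))%:R : R).
pose N : 'M[R]_#|V| := \matrix_(i, j) - hadj E R (enum_val i) (enum_val j).
have d_gt0 i : 0 < d 0 i by rewrite mxE ltr0n.
have Nsym : N^T = N by apply/matrixP => i j; rewrite !mxE hadj_sym.
have Nev mu : eigenvalue (diag_mx (\row_i (d 0 i)^-1) *m N) mu -> l1 - 1 <= mu.
  have -> : \row_i (d 0 i)^-1 = \row_i ((hdeg E (enum_val i))%:R)^-1.
    by apply/rowP => i; rewrite !mxE.
  move=> /eigenvalue_add1mx; rewrite -nlap_decomp lerBlDl; exact: l1_min.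
have := weighted_eigenvalue_ge_quad d_gt0 Nsym Nev (\row_i Y (enum_val i)).
rewrite mx_quad_diagE mx_quadE.
rewrite (big_enum_val (A := predT) (fun v => (hdeg E v)%:R * Y v ^+ 2)).
rewrite (big_enum_val (A := predT) (fun v => \sum_w Y v * - hadj E R v w * Y w)).
congr (_ * _ <= _); first by apply: eq_bigr => i _; rewrite !mxE.
apply: eq_bigr => i _.
rewrite (big_enum_val (A := predT) (fun w => Y (enum_val i) * - hadj E R (enum_val i) w * Y w)).
by apply: eq_bigr => j _; rewrite !mxE.
Qed.

End HypergraphLaplacian.

Lemma chi_t_ge (R : rcfType) (V : finType) (E : {set {set V}}) c (l1 q : R)
    (q_ge0 : 0 <= q) :
  (2 <= c)%N -> uniform E c -> E != set0 -> no_isolated E ->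
  smallest_eigenvalue E l1 ->
  (c%:R - l1) / (q + 1 - l1) <= (chi_t E q_ge0)%:R.
Proof.
move=> c_ge2 Eunif /set0Pn [e eE] Enoiso l1_smallest.
have [v0 _] : {v0 : V | v0 \in e}.
  by apply/sigW/set0Pn; rewrite -card_gt0 (Eunif e eE) (ltn_trans _ c_ge2).
rewrite /chi_t; case: ex_minnP => k /existsP [f f_tailored] _.
have d_gt0 v : 0 < (hdeg E v)%:R :> R by rewrite ltr0n.
have N_diag v : - hadj E R v v = 0 by rewrite /hadj eqxx oppr0.
have f_tailored' v :
    \sum_(w | f w == f v) - hadj E R v w <= q * (hdeg E v)%:R.
  by under eq_bigr do rewrite -normr_hadj; exact: (forallP f_tailored v).
have c_gt1 : 1 < c%:R :> R by rewrite ltr1n.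
have := tailored_coloring_bound d_gt0 N_diag (sum_oppr_hadj R Eunif)
  (hadj_quad_ge Enoiso l1_smallest) f_tailored' v0 q_ge0 c_gt1.
by congr (_ / _ <= _); ring.
Qed.

Lemma eigenvalue_const1_mx (F : fieldType) n (a : F) :
  eigenvalue (const_mx 1 : 'M_n) a -> a = 0 \/ a = n%:R.
Proof.
move=> /eigenvalueP [v vJ vnz].
have sumE j : \sum_i v 0 i = a * v 0 j.
  by have /rowP/(_ j) := vJ; rewrite !mxE; under eq_bigr do rewrite mxE mulr1.
have [s0|s_neq0] := eqVneq (\sum_i v 0 i) 0.
  left; apply: contraNeq vnz => a_neq0; apply/eqP/rowP => j.
  by have /esym/eqP := sumE j; rewrite s0 mxE mulf_eq0 (negbTE a_neq0) => /eqP.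
right; apply: (mulIf s_neq0); rewrite mulr_sumr mulr_natl.
by rewrite -(eq_bigr _ (fun j _ => sumE j)) sumr_const card_ord.
Qed.

Lemma eigenvalue0_const1_mx (F : fieldType) n :
  (1 < n)%N -> eigenvalue (const_mx 1 : 'M[F]_n) 0.
Proof.
move=> n_gt1; pose i0 := Ordinal (ltnW n_gt1); pose i1 := Ordinal n_gt1.
apply/eigenvalueP; exists (\row_j ((j == i0)%:R - (j == i1)%:R)).
  rewrite scale0r; apply/rowP => j; rewrite !mxE.
  by under eq_bigr do rewrite !mxE mulr1; rewrite sumrB !sumr_indicator subrr.
by apply/eqP => /rowP /(_ i0); rewrite !mxE eqxx subr0 => /eqP; rewrite oner_eq0.
Qed.

Section SingleEdge.
Variables (R : rcfType) (c : nat).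
Hypothesis c_ge2 : (2 <= c)%N.

Definition single_edge : {set {set 'I_c}} := [set setT].

Lemma hdeg_single_edge v : hdeg single_edge v = 1%N.
Proof.
by rewrite -(cards1 [set: 'I_c]); apply: eq_card => e; rewrite !inE andb_idr // => /eqP ->.
Qed.

Lemma ncommon_single_edge v w : ncommon single_edge v w = 1%N.
Proof.
rewrite -(cards1 [set: 'I_c]); apply: eq_card => e.
by rewrite !inE andb_idr // => /eqP ->; rewrite !inE.
Qed.

Lemma nlap_single_edge : nlap single_edge R = const_mx 1.
Proof.
apply/matrixP => i j; rewrite !mxE hdeg_single_edge invr1 mul1r /hadj.
rewrite ncommon_single_edge (inj_eq enum_val_inj).
by case: eqP => _; rewrite ?subr0 // opprK add0r.
Qed.

Lemma single_edge_uniform : uniform single_edge c.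
Proof. by move=> e; rewrite inE => /eqP ->; rewrite cardsT card_ord. Qed.

Lemma single_edge_neq0 : single_edge != set0.
Proof. by apply/set0Pn; exists setT; rewrite inE. Qed.

Lemma single_edge_no_isolated : no_isolated single_edge.
Proof. by move=> v; rewrite hdeg_single_edge. Qed.

Lemma single_edge_smallest_eigenvalue : smallest_eigenvalue single_edge (0 : R).
Proof.
rewrite /smallest_eigenvalue nlap_single_edge; split.
  by apply: eigenvalue0_const1_mx; rewrite card_ord.
by move=> a /eigenvalue_const1_mx [->|->].
Qed.

Lemma card_same_block q (v : 'I_c) :
  (#|[set w : 'I_c | (w %/ q.+1 == v %/ q.+1)%N & v != w]| <= q)%N.
Proof.
pose g (w : 'I_c) : 'I_q.+1 := Ordinal (ltn_pmod w (ltn0Sn q)).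
set A := [set w | _ & _].
have g_inj : {in A &, injective g}.
  move=> w1 w2; rewrite !inE => /andP [/eqP h1 _] /andP [/eqP h2 _] /(congr1 val) /= hm.
  by apply: val_inj; rewrite /= (divn_eq w1 q.+1) (divn_eq w2 q.+1) h1 h2 hm.
have gA_sub : g @: A \subset [set~ g v].
  apply/subsetP => x /imsetP [w]; rewrite !inE => /andP [/eqP h1 vw] ->.
  apply: contra vw => /eqP /(congr1 val) /= hm; apply/eqP/val_inj.
  by rewrite /= (divn_eq w q.+1) (divn_eq v q.+1) h1 hm.
by have := subset_leq_card gA_sub; rewrite cardsC1 card_ord card_in_imset.
Qed.

Lemma chi_t_single_edge q : (q.+1 %| c)%N ->
  chi_t single_edge (ler0n R q) = (c %/ q.+1)%N.
Proof.
move=> qc; have cE : c = (c %/ q.+1 * q.+1)%N by rewrite divnK.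
apply/eqP; rewrite eqn_leq; apply/andP; split.
  rewrite /chi_t; case: ex_minnP => k _; apply.
  have block_lt (v : 'I_c) : (v %/ q.+1 < c %/ q.+1)%N by rewrite ltn_divLR // divnK.
  apply/existsP; exists [ffun v => Ordinal (block_lt v)].
  apply/forallP => v; rewrite hdeg_single_edge mulr1.
  apply: (@le_trans _ _ #|[set w : 'I_c | (w %/ q.+1 == v %/ q.+1)%N & v != w]|%:R).
    rewrite -sum1_card natr_sum big_mkcond [X in _ <= X]big_mkcond /=.
    apply: ler_sum => w _; rewrite !ffunE inE -val_eqE /= /hadj ncommon_single_edge.
    case: (_ == _)%N => //=.
    by case: (v =P w) => _; rewrite ?normr0 ?normrN ?normr1.
  by rewrite ler_nat card_same_block.
have := chi_t_ge (ler0n R q) c_ge2 single_edge_uniform single_edge_neq0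
  single_edge_no_isolated single_edge_smallest_eigenvalue.
rewrite !subr0 -(ler_nat R) {1}cE natrM -(natrD R q 1) addn1 mulfK //.
by rewrite pnatr_eq0.
Qed.

End SingleEdge.

Theorem mainTheorem11 (R : rcfType) (c : nat) (hc : (2 <= c)%N) :
  (forall (V : finType) (E : {set {set V}}) (l1 q : R) (hq0 : 0 <= q),
      uniform E c -> E != set0 -> no_isolated E ->
      smallest_eigenvalue E l1 ->
      q <= (c%:R - 1) ->
      (chi_t E hq0)%:R >= (c%:R - l1) / (q + 1 - l1))
  /\
  (forall (q : nat), (q.+1 %| c)%N ->
     exists (V : finType) (E : {set {set V}}) (l1 : R),
       [/\ uniform E c, E != set0, no_isolated E,
           smallest_eigenvalue E l1 &
           (chi_t E (ler0n R q))%:R = (c%:R - l1) / (q%:R + 1 - l1)]).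
Proof.
(* The bound holds for every [q >= 0]. *)
split=> [V E l1 q q_ge0 Eunif En0 Enoiso l1_smallest _|q qc].
  exact: chi_t_ge.
exists 'I_c, (single_edge c), 0; split.
- exact: single_edge_uniform.
- exact: single_edge_neq0.
- exact: single_edge_no_isolated.
- exact: single_edge_smallest_eigenvalue.
rewrite chi_t_single_edge // !subr0 -{2}(divnK qc) natrM -(natrD R q 1) addn1.
by rewrite mulfK // pnatr_eq0.
Qed.
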